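(* Let $1\le p\le2$, $\epsilon>0$, and $1\le k\le n$. Let $x,\widetilde x\in\mathbb{R}^n$ satisfy $$\|\widetilde x-x\|_p\le\epsilon\,k^{1/p-1}\|x_k-x\|_1 .$$ Then $$\|\widetilde x_k-x\|_1\le(1+3\epsilon)\,\|x_k-x\|_1 .$$
   Context: For $g\in\mathbb{R}^n$, $g_k$ denotes the vector obtained from $g$ by keeping its $k$ entries of largest magnitude (ties broken lexicographically) and setting all other entries to $0$; it is a best $k$-term approximation of $g$ in any $\ell_q$ norm. *)

(* classical reals. Vectors in R^n are functions nat -> R,
   of which only the entries 0..n-1 matter. *)
From Stdlib Require Import Reals Lra Lia List.
Import ListNotations.
Open Scope R_scope.

Fixpoint rsum (n : nat) (f : nat -> R) : R :=
  match n with
  | O => 0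
  | S m => rsum m f + f m
  end.

(* real power a^q for a >= 0, with the convention 0^q = 0 (q > 0 here) *)
Definition rpow (a q : R) : R := if Req_EM_T a 0 then 0 else Rpower a q.

Definition lpnorm (n : nat) (p : R) (x : nat -> R) : R :=
  rpow (rsum n (fun i => rpow (Rabs (x i)) p)) (1 / p).

Definition l1norm (n : nat) (x : nat -> R) : R := rsum n (fun i => Rabs (x i)).

Definition vsub (x y : nat -> R) : nat -> R := fun i => x i - y i.

(* j "beats" i: |x j| > |x i|, or equal magnitude and j comes first
   (lexicographic tie-breaking). This is a strict total order on indices. *)
Definition beats (x : nat -> R) (j i : nat) : bool :=
  if Rlt_dec (Rabs (x i)) (Rabs (x j)) then true
  else if Req_EM_T (Rabs (x j)) (Rabs (x i)) then Nat.ltb j i else false.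

Definition rank_of (n : nat) (x : nat -> R) (i : nat) : nat :=
  length (filter (fun j => beats x j i) (seq 0 n)).

(* x_k : keep the k entries of largest magnitude (ties broken
   lexicographically), set all other entries to 0 *)
Definition best_k (n k : nat) (x : nat -> R) : nat -> R :=
  fun i => if Nat.ltb (rank_of n x i) k then x i else 0.

From Stdlib Require Import Reals Lra Lia List Permutation.
Open Scope bool_scope.
Open Scope R_scope.

(* Let S be the support of xt_k and T that of x_k (both of size k), and
   sig = ||x_k - x||_1.  Pointwise, ||xt_k - x||_1 is bounded by
     sig + |e|_1 on S + |e|_1 on S\T + |e|_1 on T\S
         + (|xt|_1 on T\S - |xt|_1 on S\T),            e = xt - x.
   (1) Hoelder's inequality on a set of at most k indices turns the hypothesis
       ||e||_p <= eps k^(1/p-1) sig into |e|_1 <= eps sig on each of the three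
       sets; it is proved from the tangent-line bound for t |-> t^p
       (Bernoulli's inequality), via the power-mean inequality.
   (2) The last bracket is <= 0 by an exchange argument: S\T and T\S have the
       same size and every entry of xt kept in S dominates every discarded one. *)

Definition card_on (n : nat) (A : nat -> bool) : nat := length (filter A (seq 0 n)).
Definition sum_on (n : nat) (A : nat -> bool) (f : nat -> R) : R :=
  rsum n (fun i => if A i then f i else 0).

Lemma rsum_le m f g : (forall i, (i < m)%nat -> f i <= g i) -> rsum m f <= rsum m g.
Proof.
  induction m as [|m IH]; simpl; intros Hfg; [lra|].
  assert (f m <= g m) by (apply Hfg; lia).
  assert (rsum m f <= rsum m g) by (apply IH; intros; apply Hfg; lia).
  lra.
Qed.

Lemma rsum_ext m f g : (forall i, (i < m)%nat -> f i = g i) -> rsum m f = rsum m g.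
Proof. intros E. apply Rle_antisym; apply rsum_le; intros i Hi; rewrite E by exact Hi; lra. Qed.

Lemma rsum_add m f g : rsum m (fun i => f i + g i) = rsum m f + rsum m g.
Proof. induction m as [|m IH]; simpl; [lra|]. rewrite IH. lra. Qed.

Lemma rsum_sub m f g : rsum m (fun i => f i - g i) = rsum m f - rsum m g.
Proof. induction m as [|m IH]; simpl; [lra|]. rewrite IH. lra. Qed.

Lemma rsum_scal m a f : rsum m (fun i => a * f i) = a * rsum m f.
Proof. induction m as [|m IH]; simpl; [lra|]. rewrite IH. lra. Qed.

Lemma sum_on_one m A : sum_on m A (fun _ => 1) = INR (card_on m A).
Proof.
  unfold sum_on, card_on. induction m as [|m IH]; [reflexivity|].
  cbn [rsum]. rewrite IH, seq_S, filter_app, length_app, plus_INR.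
  simpl. destruct (A m); simpl; lra.
Qed.

Lemma sum_on_card0 m A f : card_on m A = 0%nat -> sum_on m A f = 0.
Proof.
  unfold card_on, sum_on. intros H0.
  induction m as [|m IH]; [reflexivity|].
  cbn [rsum]. rewrite seq_S, filter_app, length_app in H0. simpl in H0.
  destruct (A m); simpl in H0; [lia|]. rewrite IH by lia. lra.
Qed.

Lemma sum_on_linear m A a b f g :
  sum_on m A (fun i => a * f i + b * g i) = a * sum_on m A f + b * sum_on m A g.
Proof.
  unfold sum_on. rewrite <- !rsum_scal, <- rsum_add.
  apply rsum_ext. intros i _. destruct (A i); ring.
Qed.

Lemma sum_on_le m A f g : (forall i, (i < m)%nat -> A i = true -> f i <= g i) ->
  sum_on m A f <= sum_on m A g.
Proof. intros Hfg. apply rsum_le. intros i Hi. destruct (A i) eqn:EA; [now apply Hfg|lra]. Qed.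

Lemma sum_on_le_rsum m A f : (forall i, 0 <= f i) -> sum_on m A f <= rsum m f.
Proof. intros Hf. apply rsum_le. intros i _. destruct (A i); [lra|apply Hf]. Qed.

Lemma card_on_pos_of_sum m A f : 0 < sum_on m A f -> 0 < INR (card_on m A).
Proof.
  intros Hs. destruct (card_on m A) as [|c] eqn:E0.
  - rewrite sum_on_card0 in Hs by exact E0. lra.
  - apply lt_0_INR. lia.
Qed.

Lemma rpow_nonneg a q : 0 <= rpow a q.
Proof. unfold rpow. destruct Req_EM_T; [lra|]. left. apply exp_pos. Qed.

Lemma Rpower_pos a q : 0 < Rpower a q.
Proof. apply exp_pos. Qed.

Lemma rpow_bernoulli u p : 0 <= u -> 1 <= p -> 1 + p * (u - 1) <= rpow u p.
Proof.
  intros Hu Hp. unfold rpow. destruct Req_EM_T as [->|Hu0]; [lra|].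
  assert (Hu' : 0 < u) by lra.
  unfold Rpower. set (L := ln u).
  assert (Eu : exp L = u) by now apply exp_ln.
  (* u^p = u * u^(p-1) >= u * (1 + (p-1) ln u), and u ln u >= u - 1 *)
  assert (Esplit : exp (p * L) = u * exp ((p - 1) * L)).
  { rewrite <- Eu at 1. rewrite <- exp_plus. f_equal. ring. }
  assert (Hexp := exp_ineq1_le ((p - 1) * L)).
  assert (Hlog : u - 1 <= u * L).
  { assert (Hinv := exp_ineq1_le (- L)).
    assert (Einv : exp (- L) * u = 1) by (rewrite <- Eu, <- exp_plus, Rplus_opp_l; apply exp_0).
    nra. }
  rewrite Esplit. nra.
Qed.

Lemma rpow_tangent t c p : 0 <= t -> 0 < c -> 1 <= p ->
  Rpower c p + p * Rpower c (p - 1) * (t - c) <= rpow t p.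
Proof.
  intros Ht Hc Hp.
  assert (Ecp : Rpower c p = Rpower c (p - 1) * c).
  { rewrite <- (Rpower_1 c) at 3 by lra. rewrite <- Rpower_plus. f_equal. ring. }
  assert (Hscale : rpow t p = Rpower c p * rpow (t / c) p).
  { unfold rpow. destruct (Req_EM_T t 0) as [->|Ht0].
    - unfold Rdiv. rewrite Rmult_0_l. destruct Req_EM_T; [ring|lra].
    - destruct Req_EM_T as [E|_].
      { exfalso. apply Ht0. replace t with (t / c * c) by (field; lra). rewrite E. ring. }
      rewrite Rpower_mult_distr by (try apply Rdiv_lt_0_compat; lra).
      f_equal. field. lra. }
  assert (Htc : 0 <= t / c) by (unfold Rdiv; apply Rmult_le_pos; [lra|left; apply Rinv_0_lt_compat; lra]).
  assert (Hb := rpow_bernoulli (t / c) p Htc Hp).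
  assert (Hcp := Rpower_pos c (p - 1)).
  rewrite Hscale, Ecp.
  replace (Rpower c (p - 1) * c + p * Rpower c (p - 1) * (t - c))
    with (Rpower c (p - 1) * c * (1 + p * (t / c - 1))) by (field; lra).
  apply Rmult_le_compat_l; [nra|exact Hb].
Qed.

Lemma power_mean n A e p : 1 <= p -> 0 < sum_on n A (fun i => Rabs (e i)) ->
  INR (card_on n A) * Rpower (sum_on n A (fun i => Rabs (e i)) / INR (card_on n A)) p
    <= sum_on n A (fun i => rpow (Rabs (e i)) p).
Proof.
  intros Hp Hs.
  set (s := sum_on n A (fun i => Rabs (e i))) in *.
  set (m := INR (card_on n A)).
  assert (Hm : 0 < m) by now apply (card_on_pos_of_sum n A (fun i => Rabs (e i))).
  set (c := s / m).
  assert (Hc : 0 < c) by (apply Rdiv_lt_0_compat; lra).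
  set (a := Rpower c p - p * Rpower c (p - 1) * c).
  set (b := p * Rpower c (p - 1)).
  (* sum the tangent-line bound at c over A *)
  assert (Etangent : sum_on n A (fun i => a * 1 + b * Rabs (e i)) = m * Rpower c p).
  { rewrite sum_on_linear, sum_on_one. fold m s. unfold a, b, c. field. lra. }
  rewrite <- Etangent. apply sum_on_le. intros i _ _.
  pose proof (rpow_tangent (Rabs (e i)) c p (Rabs_pos _) Hc Hp). unfold a, b. lra.
Qed.

Lemma sum_on_le_lpnorm n A e p k : 1 <= p -> 1 <= k -> INR (card_on n A) <= k ->
  sum_on n A (fun i => Rabs (e i)) <= Rpower k (1 - 1 / p) * lpnorm n p e.
Proof.
  intros Hp Hk Hmk.
  set (s := sum_on n A (fun i => Rabs (e i))).
  set (m := INR (card_on n A)) in *.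
  set (Sp := rsum n (fun i => rpow (Rabs (e i)) p)).
  assert (Hkp := Rpower_pos k (1 - 1 / p)).
  assert (Hnorm := rpow_nonneg Sp (1 / p)).
  destruct (Rle_lt_dec s 0) as [Hs|Hs].
  { unfold lpnorm. fold Sp. nra. }
  assert (Hm : 0 < m) by now apply (card_on_pos_of_sum n A (fun i => Rabs (e i))).
  set (c := s / m).
  assert (Hc : 0 < c) by (apply Rdiv_lt_0_compat; lra).
  assert (Hcp := Rpower_pos c p).
  assert (Hmean : m * Rpower c p <= Sp).
  { apply Rle_trans with (1 := power_mean n A e p Hp Hs).
    apply sum_on_le_rsum. intros i. apply rpow_nonneg. }
  assert (HSp : 0 < Sp) by (apply Rlt_le_trans with (2 := Hmean); now apply Rmult_lt_0_compat).
  assert (Elp : lpnorm n p e = Rpower Sp (1 / p)).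
  { unfold lpnorm. fold Sp. unfold rpow at 1. destruct Req_EM_T; [lra|reflexivity]. }
  assert (Hp' : 0 < 1 / p <= 1).
  { split; [apply Rdiv_lt_0_compat; lra|].
    apply Rmult_le_reg_r with p; [lra|]. field_simplify; lra. }
  assert (Hroot : Rpower m (1 / p) * c <= lpnorm n p e).
  { rewrite Elp.
    replace (Rpower m (1 / p) * c) with (Rpower (m * Rpower c p) (1 / p)).
    - apply Rle_Rpower_l; [lra|]. split; [now apply Rmult_lt_0_compat|exact Hmean].
    - rewrite <- Rpower_mult_distr, Rpower_mult by lra.
      replace (p * (1 / p)) with 1 by (field; lra). now rewrite Rpower_1. }
  assert (Es : s = Rpower m (1 - 1 / p) * (Rpower m (1 / p) * c)).
  { rewrite <- Rmult_assoc, <- Rpower_plus.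
    replace (1 - 1 / p + 1 / p) with 1 by ring. rewrite Rpower_1 by lra.
    unfold c. field. lra. }
  assert (Hmk' : Rpower m (1 - 1 / p) <= Rpower k (1 - 1 / p))
    by (apply Rle_Rpower_l; lra).
  assert (Hmp := Rpower_pos m (1 / p)).
  rewrite Es. apply Rle_trans with (Rpower m (1 - 1 / p) * lpnorm n p e).
  - apply Rmult_le_compat_l; [left; apply Rpower_pos|exact Hroot].
  - apply Rmult_le_compat_r; [rewrite Elp; apply Rlt_le, Rpower_pos|exact Hmk'].
Qed.

Lemma filter_length_mono (f g : nat -> bool) l :
  (forall y, In y l -> f y = true -> g y = true) ->
  (length (filter f l) <= length (filter g l))%nat.
Proof.
  induction l as [|a l IH]; simpl; intros Hfg; [lia|].
  assert (Hl := IH (fun y Hy => Hfg y (or_intror Hy))).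
  destruct (f a) eqn:Ef; [rewrite (Hfg a (or_introl eq_refl) Ef)|destruct (g a)]; simpl; lia.
Qed.

Lemma filter_length_strict (f g : nat -> bool) l :
  (forall y, In y l -> f y = true -> g y = true) ->
  forall z, In z l -> f z = false -> g z = true ->
  (length (filter f l) < length (filter g l))%nat.
Proof.
  induction l as [|a l IH]; simpl; intros Hfg z Hz Hf Hg; [contradiction|].
  destruct Hz as [<-|Hz].
  - rewrite Hf, Hg. simpl.
    pose proof (filter_length_mono f g l (fun y Hy => Hfg y (or_intror Hy))). lia.
  - assert (Hl := IH (fun y Hy => Hfg y (or_intror Hy)) z Hz Hf Hg).
    destruct (f a) eqn:Ef; [rewrite (Hfg a (or_introl eq_refl) Ef)|destruct (g a)]; simpl; lia.
Qed.

Lemma card_on_mono n A B : (forall i, A i = true -> B i = true) -> (card_on n A <= card_on n B)%nat.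
Proof. intros HAB. apply filter_length_mono. auto. Qed.

Lemma filter_length_perm (f : nat -> bool) l l' :
  Permutation l l' -> length (filter f l) = length (filter f l').
Proof.
  induction 1; simpl; auto.
  - destruct (f x); simpl; auto.
  - destruct (f x), (f y); simpl; auto.
  - congruence.
Qed.

Lemma card_seq_lt k m : length (filter (fun v => Nat.ltb v k) (seq 0 m)) = Nat.min k m.
Proof.
  induction m as [|m IH]; [simpl; lia|].
  rewrite seq_S, filter_app, length_app, IH. simpl.
  destruct (Nat.ltb m k) eqn:E; [apply Nat.ltb_lt in E|apply Nat.ltb_ge in E]; simpl; lia.
Qed.

Section Ranking.
Variable n : nat.
Variable x : nat -> R.

Lemma beats_irrefl i : beats x i i = false.
Proof.
  unfold beats. destruct Rlt_dec; [lra|].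
  destruct Req_EM_T; [apply Nat.ltb_irrefl|reflexivity].
Qed.

Lemma beats_trans a b c : beats x a b = true -> beats x b c = true -> beats x a c = true.
Proof.
  unfold beats. repeat destruct Rlt_dec; repeat destruct Req_EM_T; intros;
    rewrite ?Nat.ltb_lt in *; try lra; try lia; try discriminate; reflexivity.
Qed.

Lemma beats_total i j : i <> j -> beats x j i = true \/ beats x i j = true.
Proof.
  intros Hij. unfold beats.
  repeat destruct Rlt_dec; repeat destruct Req_EM_T; rewrite ?Nat.ltb_lt; try lra; auto; lia.
Qed.

(* An index beating i has strictly smaller rank: everything above it is above i. *)
Lemma rank_lt_of_beats i j : (j < n)%nat -> beats x j i = true ->
  (rank_of n x j < rank_of n x i)%nat.
Proof.
  intros Hj Hb. apply filter_length_strict with (z := j).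
  - intros y _ Hy. eapply beats_trans; eauto.
  - apply in_seq. lia.
  - apply beats_irrefl.
  - exact Hb.
Qed.

Lemma rank_lt_n i : (i < n)%nat -> (rank_of n x i < n)%nat.
Proof.
  intros Hi. unfold rank_of. rewrite <- (length_seq n 0) at 2.
  rewrite <- (filter_true (seq 0 n)) at 2.
  apply filter_length_strict with (z := i); auto.
  - apply in_seq. lia.
  - apply beats_irrefl.
Qed.

(* Distinct indices are comparable, hence have distinct ranks. *)
Lemma rank_inj i j : (i < n)%nat -> (j < n)%nat -> rank_of n x i = rank_of n x j -> i = j.
Proof.
  intros Hi Hj E. destruct (Nat.eq_dec i j) as [|Hij]; auto. exfalso.
  destruct (beats_total i j Hij) as [Hb|Hb].
  - pose proof (rank_lt_of_beats i j Hj Hb). lia.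
  - pose proof (rank_lt_of_beats j i Hi Hb). lia.
Qed.

Definition top_k (k : nat) : nat -> bool := fun i => Nat.ltb (rank_of n x i) k.

(* rank_of is a bijection of {0..n-1}, so exactly k indices have rank < k. *)
Lemma card_top_k k : (k <= n)%nat -> card_on n (top_k k) = k.
Proof.
  intros Hk.
  assert (Hperm : Permutation (map (rank_of n x) (seq 0 n)) (seq 0 n)).
  { apply Permutation_map_same_l.
    - apply FinFun.Injective_map_NoDup_in; [|apply seq_NoDup].
      intros a b Ha Hb. apply in_seq in Ha, Hb. apply rank_inj; lia.
    - intros y Hy. apply in_map_iff in Hy as [a [<- Ha]]. apply in_seq in Ha.
      apply in_seq. pose proof (rank_lt_n a). lia. }
  unfold card_on, top_k.
  transitivity (length (filter (fun v => Nat.ltb v k) (map (rank_of n x) (seq 0 n)))).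
  - now rewrite filter_map_swap, length_map.
  - rewrite (filter_length_perm _ _ _ Hperm), card_seq_lt. lia.
Qed.

Lemma top_k_dominates k i j : (j < n)%nat -> top_k k i = true -> top_k k j = false ->
  Rabs (x j) <= Rabs (x i).
Proof.
  unfold top_k. intros Hj Hi Hjk. apply Nat.ltb_lt in Hi. apply Nat.ltb_ge in Hjk.
  destruct (Rle_dec (Rabs (x j)) (Rabs (x i))) as [|Hn]; auto. exfalso.
  assert (Hb : beats x j i = true) by (unfold beats; destruct Rlt_dec; [reflexivity|lra]).
  pose proof (rank_lt_of_beats i j Hj Hb). lia.
Qed.
End Ranking.

(* Maximum of f over the indices i < m with P i, or 0 if there is none. *)
Fixpoint max_on (m : nat) (f : nat -> R) (P : nat -> bool) : R :=
  match m with
  | O => 0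
  | S m' => if P m' then Rmax (max_on m' f P) (f m') else max_on m' f P
  end.

Lemma max_on_ge m f P i : (i < m)%nat -> P i = true -> f i <= max_on m f P.
Proof.
  induction m as [|m IH]; simpl; intros Hi HP; [lia|].
  destruct (Nat.eq_dec i m) as [->|Hne].
  - rewrite HP. apply Rmax_r.
  - destruct (P m).
    + eapply Rle_trans; [apply IH; auto; lia|apply Rmax_l].
    + apply IH; auto; lia.
Qed.

Lemma max_on_le m f P c : 0 <= c -> (forall i, (i < m)%nat -> P i = true -> f i <= c) ->
  max_on m f P <= c.
Proof.
  induction m as [|m IH]; simpl; intros Hc Hf; [lra|].
  destruct (P m) eqn:EP.
  - apply Rmax_lub; [apply IH|apply Hf]; auto.
  - apply IH; auto.
Qed.

(* The
   threshold th = max of f over A \ B separates the two differences. *)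
Lemma sum_on_exchange n A B f : (forall i, 0 <= f i) -> card_on n A = card_on n B ->
  (forall i j, (i < n)%nat -> (j < n)%nat -> A i = true -> B i = false ->
     B j = true -> A j = false -> f i <= f j) ->
  sum_on n (fun i => A i && negb (B i)) f <= sum_on n (fun i => B i && negb (A i)) f.
Proof.
  intros Hf Hcard Hdom.
  set (th := max_on n f (fun i => A i && negb (B i))).
  assert (Hpt : rsum n (fun i => (if A i && negb (B i) then f i else 0)
                                 - (if B i && negb (A i) then f i else 0))
             <= rsum n (fun i => th * (if A i then 1 else 0) - th * (if B i then 1 else 0))).
  { apply rsum_le. intros i Hi.
    destruct (A i) eqn:EA, (B i) eqn:EB; simpl; try lra.
    - assert (f i <= th) by (apply max_on_ge; [exact Hi|now rewrite EA, EB]). lra.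
    - assert (th <= f i); [|lra].
      apply max_on_le; [apply Hf|]. intros j Hj HAB.
      apply andb_prop in HAB as [HAj HBj]. apply Bool.negb_true_iff in HBj.
      now apply Hdom. }
  rewrite !rsum_sub, !rsum_scal in Hpt.
  change (rsum n (fun i => if A i then 1 else 0)) with (sum_on n A (fun _ => 1)) in Hpt.
  change (rsum n (fun i => if B i then 1 else 0)) with (sum_on n B (fun _ => 1)) in Hpt.
  rewrite !sum_on_one, Hcard in Hpt. unfold sum_on. lra.
Qed.

Lemma support_swap_bound (s t : bool) (a b : R) :
  Rabs ((if s then a else 0) - b)
  <= Rabs ((if t then b else 0) - b)
     + (if s then Rabs (a - b) else 0)
     + (if s && negb t then Rabs (a - b) else 0)
     + (if t && negb s then Rabs (a - b) else 0)
     + (if t && negb s then Rabs a else 0)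
     - (if s && negb t then Rabs a else 0).
Proof. destruct s, t; simpl; unfold Rabs; repeat destruct Rcase_abs; lra. Qed.

Lemma error_on_small_set n k p eps sig e A : 1 <= p -> (1 <= k)%nat ->
  lpnorm n p e <= eps * Rpower (INR k) (1 / p - 1) * sig ->
  (card_on n A <= k)%nat -> sum_on n A (fun i => Rabs (e i)) <= eps * sig.
Proof.
  intros Hp Hk He HA.
  assert (Hk' : 1 <= INR k) by (apply (le_INR 1); lia).
  eapply Rle_trans; [apply (sum_on_le_lpnorm n A e p (INR k) Hp Hk'); now apply le_INR|].
  replace (eps * sig) with (Rpower (INR k) (1 - 1 / p) * (eps * Rpower (INR k) (1 / p - 1) * sig)).
  - apply Rmult_le_compat_l; [apply Rlt_le, Rpower_pos|exact He].
  - replace (Rpower (INR k) (1 - 1 / p) * (eps * Rpower (INR k) (1 / p - 1) * sig))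
      with (Rpower (INR k) ((1 - 1 / p) + (1 / p - 1)) * eps * sig)
      by (rewrite Rpower_plus; ring).
    replace ((1 - 1 / p) + (1 / p - 1)) with 0 by ring.
    rewrite Rpower_O by lra. ring.
Qed.

Theorem mainTheorem10 (n k : nat) (p eps : R) (x xt : nat -> R) :
  1 <= p <= 2 -> 0 < eps -> (1 <= k)%nat -> (k <= n)%nat ->
  lpnorm n p (vsub xt x)
    <= eps * Rpower (INR k) (1 / p - 1) * l1norm n (vsub (best_k n k x) x) ->
  l1norm n (vsub (best_k n k xt) x)
    <= (1 + 3 * eps) * l1norm n (vsub (best_k n k x) x).
Proof.
  intros [Hp _] _ Hk Hkn Hlp.
  set (S := top_k n xt k). set (T := top_k n x k).
  set (sig := l1norm n (vsub (best_k n k x) x)) in *.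
  set (err := fun i => Rabs (xt i - x i)).
  assert (Herr : forall A, (card_on n A <= k)%nat -> sum_on n A err <= eps * sig)
    by (intros A; exact (error_on_small_set n k p eps sig (vsub xt x) A Hp Hk Hlp)).
  assert (HS : card_on n S = k) by now apply card_top_k.
  assert (HT : card_on n T = k) by now apply card_top_k.
  assert (HST : sum_on n (fun i => S i && negb (T i)) err <= eps * sig)
    by (apply Herr; rewrite <- HS; apply card_on_mono; intros i; now destruct (S i)).
  assert (HTS : sum_on n (fun i => T i && negb (S i)) err <= eps * sig)
    by (apply Herr; rewrite <- HT; apply card_on_mono; intros i; now destruct (T i)).
  (* the entries of xt moved into T \ S are dominated by those kept in S \ T *)
  assert (Hexch : sum_on n (fun i => T i && negb (S i)) (fun i => Rabs (xt i))
                  <= sum_on n (fun i => S i && negb (T i)) (fun i => Rabs (xt i))).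
  { apply sum_on_exchange; [intros; apply Rabs_pos|congruence|].
    intros i j Hi _ _ HSi HSj _. exact (top_k_dominates n xt k j i Hi HSj HSi). }
  unfold l1norm at 1, vsub, best_k.
  eapply Rle_trans; [apply rsum_le; intros i _; apply (support_swap_bound (S i) (T i))|].
  rewrite rsum_sub, !rsum_add.
  change (rsum n (fun i => Rabs ((if T i then x i else 0) - x i))) with sig.
  assert (HSerr := Herr S (Nat.eq_le_incl _ _ HS)).
  unfold sum_on, err in *. lra.
Qed.
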